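(* Let $X$ be a real Hilbert space, let $\alpha_1,\alpha_2\in\left]-\infty,1\right[$, let $\beta_1,\beta_2\ge0$, and suppose $\alpha_2(\alpha_2-1)\le\beta_2^2$. Set $$\delta_1=\tfrac{\alpha_1}{1-\alpha_1}\Big(1-\tfrac{(1-\alpha_2)^2-\beta_2^2}{1-\alpha_2}\Big),\quad \delta_2=\tfrac{\alpha_2}{1-\alpha_2},$$ $$\delta_3=1-\Big(\tfrac{(1-\alpha_1)^2-\beta_1^2}{1-\alpha_1}\Big(1-\tfrac{(1-\alpha_2)^2-\beta_2^2}{1-\alpha_2}\Big)+\tfrac{(1-\alpha_2)^2-\beta_2^2}{1-\alpha_2}\Big).$$ Suppose $R_1\colon X\to X$ admits an $(\alpha_1,\beta_1)$-I-N decomposition and $R_2\colon X\to X$ admits an $(\alpha_2,\beta_2)$-I-N decomposition. Then for all $x,y\in X$, $$\|R_2R_1x-R_2R_1y\|^2+\delta_1\|(\mathrm{Id}-R_1)x-(\mathrm{Id}-R_1)y\|^2+\delta_2\|(\mathrm{Id}-R_2)R_1x-(\mathrm{Id}-R_2)R_1y\|^2\le\delta_3\|x-y\|^2.$$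
   Context: For $(\alpha,\beta)\in\mathbb{R}\times[0,\infty[$, an operator $R\colon X\to X$ admits an $(\alpha,\beta)$-I-N (Identity-Nonexpansive) decomposition if there exists a nonexpansive ($1$-Lipschitz) $N\colon X\to X$ with $R=\alpha\mathrm{Id}+\beta N$. *)

From Stdlib Require Import Reals.
Open Scope R_scope.

Record RealHilbert := {
  hs_car :> Type;
  hs_zero : hs_car;
  hs_add : hs_car -> hs_car -> hs_car;
  hs_opp : hs_car -> hs_car;
  hs_scal : R -> hs_car -> hs_car;
  hs_inner : hs_car -> hs_car -> R;
  hs_addA : forall x y z, hs_add x (hs_add y z) = hs_add (hs_add x y) z;
  hs_addC : forall x y, hs_add x y = hs_add y x;
  hs_add0 : forall x, hs_add x hs_zero = x;
  hs_addN : forall x, hs_add x (hs_opp x) = hs_zero;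
  hs_scalA : forall a b x, hs_scal a (hs_scal b x) = hs_scal (a * b) x;
  hs_scal1 : forall x, hs_scal 1 x = x;
  hs_scalDr : forall a x y, hs_scal a (hs_add x y) = hs_add (hs_scal a x) (hs_scal a y);
  hs_scalDl : forall a b x, hs_scal (a + b) x = hs_add (hs_scal a x) (hs_scal b x);
  hs_innerC : forall x y, hs_inner x y = hs_inner y x;
  hs_innerDl : forall x y z, hs_inner (hs_add x y) z = hs_inner x z + hs_inner y z;
  hs_innerZl : forall a x y, hs_inner (hs_scal a x) y = a * hs_inner x y;
  hs_inner_ge0 : forall x, 0 <= hs_inner x x;
  hs_inner_eq0 : forall x, hs_inner x x = 0 -> x = hs_zero;
  hs_complete : forall u : nat -> hs_car,
    (forall eps, eps > 0 -> exists N : nat, forall m n, (m >= N)%nat -> (n >= N)%nat ->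
        sqrt (hs_inner (hs_add (u m) (hs_opp (u n))) (hs_add (u m) (hs_opp (u n)))) < eps) ->
    exists l, forall eps, eps > 0 -> exists N : nat, forall n, (n >= N)%nat ->
        sqrt (hs_inner (hs_add (u n) (hs_opp l)) (hs_add (u n) (hs_opp l))) < eps
}.

Arguments hs_zero {_}.
Arguments hs_add {_} _ _.
Arguments hs_opp {_} _.
Arguments hs_scal {_} _ _.
Arguments hs_inner {_} _ _.

Definition hs_sub {X : RealHilbert} (x y : X) : X := hs_add x (hs_opp y).
Definition hs_norm {X : RealHilbert} (x : X) : R := sqrt (hs_inner x x).

Definition nonexpansive {X : RealHilbert} (N : X -> X) : Prop :=
  forall x y : X, hs_norm (hs_sub (N x) (N y)) <= hs_norm (hs_sub x y).

Definition IN_decomposition {X : RealHilbert} (alpha beta : R) (Rop : X -> X) : Prop :=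
  exists N : X -> X, nonexpansive N /\
    forall x : X, Rop x = hs_add (hs_scal alpha x) (hs_scal beta (N x)).

From Stdlib Require Import Reals Lra.
Open Scope R_scope.

(* For [R = a Id + b N] with [a < 1], expanding the squares gives the identity
   [|Rx - Ry|^2 + a/(1-a) |(Id-R)x - (Id-R)y|^2 = a |x-y|^2 + b^2/(1-a) |Nx - Ny|^2],
   so nonexpansiveness of [N] bounds the left side by [k |x-y|^2] with
   [k = a + b^2/(1-a)].  Apply this to [R2] at [R1 x, R1 y], multiply the
   inequality for [R1] by [k2 >= 0] (this is where [a2 (a2-1) <= b2^2] is used)
   and add: the constants of the theorem are [delta1 = k2 a1/(1-a1)] and
   [delta3 = k1 k2]. *)

Definition IN_constant (a b : R) : R := 1 - ((1 - a) ^ 2 - b ^ 2) / (1 - a).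

Lemma IN_constantE (a b : R) : a < 1 -> IN_constant a b = a + b ^ 2 / (1 - a).
Proof. intros Ha. unfold IN_constant. field. lra. Qed.

Lemma IN_constant_ge0 (a b : R) :
  a < 1 -> a * (a - 1) <= b ^ 2 -> 0 <= IN_constant a b.
Proof.
  intros Ha Hab. rewrite IN_constantE by exact Ha.
  replace (a + b ^ 2 / (1 - a)) with ((b ^ 2 - a * (a - 1)) / (1 - a)) by (field; lra).
  apply Rle_mult_inv_pos; lra.
Qed.

Section InnerProduct.
Variable X : RealHilbert.

Lemma hs_inner0l (z : X) : hs_inner hs_zero z = 0.
Proof. assert (H := hs_innerDl X hs_zero hs_zero z). rewrite hs_add0 in H. lra. Qed.

Lemma hs_innerNl (x z : X) : hs_inner (hs_opp x) z = - hs_inner x z.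
Proof.
  assert (H := hs_innerDl X x (hs_opp x) z). rewrite hs_addN, hs_inner0l in H. lra.
Qed.

Lemma hs_innerDr (x y z : X) : hs_inner z (hs_add x y) = hs_inner z x + hs_inner z y.
Proof. rewrite !(hs_innerC X z). apply hs_innerDl. Qed.

Lemma hs_innerZr (a : R) (x z : X) : hs_inner z (hs_scal a x) = a * hs_inner z x.
Proof. rewrite !(hs_innerC X z). apply hs_innerZl. Qed.

Lemma hs_innerNr (x z : X) : hs_inner z (hs_opp x) = - hs_inner z x.
Proof. rewrite !(hs_innerC X z). apply hs_innerNl. Qed.

Lemma hs_norm_sq (z : X) : hs_norm z ^ 2 = hs_inner z z.
Proof. apply pow2_sqrt, hs_inner_ge0. Qed.

Lemma nonexpansive_sq (N : X -> X) (x y : X) : nonexpansive N ->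
  hs_inner (hs_sub (N x) (N y)) (hs_sub (N x) (N y)) <= hs_inner (hs_sub x y) (hs_sub x y).
Proof.
  intros HN. rewrite <- !hs_norm_sq.
  assert (H := HN x y). assert (H0 := sqrt_pos (hs_inner (hs_sub (N x) (N y)) (hs_sub (N x) (N y)))).
  unfold hs_norm in *. nra.
Qed.

End InnerProduct.

Ltac inner_expand :=
  unfold hs_sub;
  repeat rewrite ?hs_innerDl, ?hs_innerDr, ?hs_innerNl, ?hs_innerNr, ?hs_innerZl, ?hs_innerZr.

Section INDecomposition.
Variables (X : RealHilbert) (a b : R) (Rop N : X -> X).
Hypothesis Ha : a < 1.
Hypothesis HR : forall x, Rop x = hs_add (hs_scal a x) (hs_scal b (N x)).

Lemma IN_decomposition_identity (x y : X) :
  hs_inner (hs_sub (Rop x) (Rop y)) (hs_sub (Rop x) (Rop y))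
  + a / (1 - a) * hs_inner (hs_sub (hs_sub x (Rop x)) (hs_sub y (Rop y)))
                           (hs_sub (hs_sub x (Rop x)) (hs_sub y (Rop y)))
  = a * hs_inner (hs_sub x y) (hs_sub x y)
    + b ^ 2 / (1 - a) * hs_inner (hs_sub (N x) (N y)) (hs_sub (N x) (N y)).
Proof.
  rewrite !HR. inner_expand.
  rewrite (hs_innerC X y x), (hs_innerC X (N x) x), (hs_innerC X (N y) x),
    (hs_innerC X (N x) y), (hs_innerC X (N y) y), (hs_innerC X (N y) (N x)).
  field. lra.
Qed.

Lemma IN_decomposition_ineq (x y : X) : nonexpansive N ->
  hs_inner (hs_sub (Rop x) (Rop y)) (hs_sub (Rop x) (Rop y))
  + a / (1 - a) * hs_inner (hs_sub (hs_sub x (Rop x)) (hs_sub y (Rop y)))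
                           (hs_sub (hs_sub x (Rop x)) (hs_sub y (Rop y)))
  <= IN_constant a b * hs_inner (hs_sub x y) (hs_sub x y).
Proof.
  intros HN. rewrite IN_decomposition_identity, IN_constantE by exact Ha.
  assert (Hc : 0 <= b ^ 2 / (1 - a)) by (apply Rle_mult_inv_pos; nra).
  assert (HNxy := nonexpansive_sq X N x y HN).
  nra.
Qed.

End INDecomposition.

Theorem mainTheorem5 (X : RealHilbert) (alpha1 alpha2 beta1 beta2 : R)
  (R1 R2 : X -> X)
  (Ha1 : alpha1 < 1) (Ha2 : alpha2 < 1)
  (Hb1 : 0 <= beta1) (Hb2 : 0 <= beta2)
  (Hab2 : alpha2 * (alpha2 - 1) <= beta2 ^ 2)
  (HR1 : IN_decomposition alpha1 beta1 R1)
  (HR2 : IN_decomposition alpha2 beta2 R2) :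
  let delta1 := alpha1 / (1 - alpha1) *
                (1 - ((1 - alpha2) ^ 2 - beta2 ^ 2) / (1 - alpha2)) in
  let delta2 := alpha2 / (1 - alpha2) in
  let delta3 := 1 - (((1 - alpha1) ^ 2 - beta1 ^ 2) / (1 - alpha1) *
                       (1 - ((1 - alpha2) ^ 2 - beta2 ^ 2) / (1 - alpha2))
                     + ((1 - alpha2) ^ 2 - beta2 ^ 2) / (1 - alpha2)) in
  forall x y : X,
    hs_norm (hs_sub (R2 (R1 x)) (R2 (R1 y))) ^ 2
    + delta1 * hs_norm (hs_sub (hs_sub x (R1 x)) (hs_sub y (R1 y))) ^ 2
    + delta2 * hs_norm (hs_sub (hs_sub (R1 x) (R2 (R1 x)))
                               (hs_sub (R1 y) (R2 (R1 y)))) ^ 2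
    <= delta3 * hs_norm (hs_sub x y) ^ 2.
Proof.
  intros delta1 delta2 delta3 x y.
  destruct HR1 as [N1 [HN1 E1]], HR2 as [N2 [HN2 E2]].
  assert (H1 := IN_decomposition_ineq X alpha1 beta1 R1 N1 Ha1 E1 x y HN1).
  assert (H2 := IN_decomposition_ineq X alpha2 beta2 R2 N2 Ha2 E2 (R1 x) (R1 y) HN2).
  assert (Hk2 := IN_constant_ge0 alpha2 beta2 Ha2 Hab2).
  assert (Hdelta3 : delta3 = IN_constant alpha1 beta1 * IN_constant alpha2 beta2).
  { unfold delta3, IN_constant. field. split; lra. }
  rewrite Hdelta3, !hs_norm_sq. unfold delta1, delta2. fold (IN_constant alpha2 beta2).
  assert (H1' := Rmult_le_compat_l _ _ _ Hk2 H1).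
  nra.
Qed.
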